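(* Let $v\in C_q(\mathcal D,\widetilde M)$ satisfy $2v_t=\mathrm{i}(v_{xx}-2vv^*v)$ on $\mathcal D$. Then for every $r\ge0$ the mixed derivatives satisfy $\big(\partial_x^k v\big)_{xt}=\big(\partial_x^k v\big)_{tx}$ for $0\le k\le r$ on a square $\{0\le x,t\le\varepsilon\}$ (some $\varepsilon>0$), and all functions $\big(\partial_x^k v\big)(0,t)$ (for $t$ in a neighbourhood $[0,\varepsilon]$ of $0$) and in particular all the numbers $\big(\partial_x^k v\big)(0,0)$, $k\ge0$, are uniquely determined by the boundary values $v(0,t)$ and $v_x(0,t)$, $0\le t<a$. Consequently $v(x,0)$, $x\ge0$, is uniquely determined by $v(0,\cdot)$ and $v_x(0,\cdot)$.
   Context: $\mathcal D=\{(x,t):0\le x<\infty,\ 0\le t<a\}$, $0<a\le\infty$. For constants $\widetilde M_k>0$, $C(\{\widetilde M_k\})$ is the class of infinitely differentiable functions $f$ on $[0,\infty)$ with $|f^{(k)}(x)|\le a(f)^{k+1}\widetilde M_k$ for all $x\ge0$, $k\ge0$, for some $a(f)\ge0$; it is quasi-analytic if, for its elements, vanishing of all derivatives at one point $x\ge0$ forces $f\equiv0$. $C_q(\mathcal D,\widetilde M)$, $\widetilde M=\{\widetilde M_k(i,j)\}$, is the class of $m_1\times m_2$ matrix functions $v$ that are continuously differentiable on $\mathcal D$, have $v_{xx}$ existing, satisfy $\sup_{x>0,\,0\le s\le t}\|v(x,s)\|<\infty$ for each $t<a$, whose entries $v_{ij}(x,0)$ lie in quasi-analytic classes $C(\{\widetilde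 M_k(i,j)\}_k)$, and such that for each $k$ there is $\varepsilon_k>0$ with $v$ $k$ times continuously differentiable in $x$ on $\{0\le x\le\varepsilon_k,\ 0\le t\le\varepsilon_k\}\subset\mathcal D$. Boundary derivatives are one-sided. *)

From Stdlib Require Import Reals.
Open Scope R_scope.

Definition C : Type := (R * R)%type.
Definition C0 : C := (0, 0).
Definition Cadd (z w : C) : C := (fst z + fst w, snd z + snd w).
Definition Copp (z : C) : C := (- fst z, - snd z).
Definition Cmul (z w : C) : C :=
  (fst z * fst w - snd z * snd w, fst z * snd w + snd z * fst w).
Definition Cconj (z : C) : C := (fst z, - snd z).
Definition CRscal (r : R) (z : C) : C := (r * fst z, r * snd z).
Definition Ci : C := (0, 1).
Definition Cmod (z : C) : R := sqrt (fst z ^ 2 + snd z ^ 2).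
Fixpoint Csum (n : nat) (f : nat -> C) : C :=
  match n with O => C0 | S n => Cadd (Csum n f) (f n) end.

(** * Derivatives within a set (one-sided at boundary points) *)
Definition is_deriv_in (S : R -> Prop) (g : R -> R) (x l : R) : Prop :=
  forall eps, 0 < eps -> exists delta, 0 < delta /\
    forall h, h <> 0 -> Rabs h < delta -> S (x + h) ->
      Rabs ((g (x + h) - g x) / h - l) < eps.

Definition is_Cderiv_in (S : R -> Prop) (f : R -> C) (x : R) (l : C) : Prop :=
  is_deriv_in S (fun y => fst (f y)) x (fst l) /\
  is_deriv_in S (fun y => snd (f y)) x (snd l).

(** * Matrix functions: v x t i j is the (i,j) entry at (x,t) *)
Definition Mat : Type := nat -> nat -> C.
Definition Mfun : Type := R -> R -> Mat.

Definition Meq (m1 m2 : nat) (A B : Mat) : Prop :=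
  forall i j, (i < m1)%nat -> (j < m2)%nat -> A i j = B i j.

Definition pdx_in (m1 m2 : nat) (Om : R -> R -> Prop) (u ux : Mfun) : Prop :=
  forall x t i j, Om x t -> (i < m1)%nat -> (j < m2)%nat ->
    is_Cderiv_in (fun y => Om y t) (fun y => u y t i j) x (ux x t i j).

Definition pdt_in (m1 m2 : nat) (Om : R -> R -> Prop) (u ut : Mfun) : Prop :=
  forall x t i j, Om x t -> (i < m1)%nat -> (j < m2)%nat ->
    is_Cderiv_in (fun s => Om x s) (fun s => u x s i j) t (ut x t i j).

Definition cont_in (m1 m2 : nat) (Om : R -> R -> Prop) (u : Mfun) : Prop :=
  forall x t i j, Om x t -> (i < m1)%nat -> (j < m2)%nat ->
    forall eps, 0 < eps -> exists delta, 0 < delta /\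
      forall y s, Om y s -> Rabs (y - x) < delta -> Rabs (s - t) < delta ->
        Cmod (Cadd (u y s i j) (Copp (u x t i j))) < eps.

(** * The domain D = [0,oo) x [0,a), 0 < a <= oo; a = None encodes a = oo *)
Definition below_a (a : option R) (t : R) : Prop :=
  match a with Some a0 => t < a0 | None => True end.
Definition a_pos (a : option R) : Prop :=
  match a with Some a0 => 0 < a0 | None => True end.
Definition Dom (a : option R) (x t : R) : Prop :=
  0 <= x /\ 0 <= t /\ below_a a t.
Definition Sq (eps x t : R) : Prop := 0 <= x <= eps /\ 0 <= t <= eps.

Definition xderiv_family (m1 m2 : nat) (Om : R -> R -> Prop) (v : Mfun)
    (n : nat) (F : nat -> Mfun) : Prop :=
  (forall x t, Om x t -> Meq m1 m2 (F 0%nat x t) (v x t)) /\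
  (forall k, (k < n)%nat -> pdx_in m1 m2 Om (F k) (F (S k))) /\
  (forall k, (k <= n)%nat -> cont_in m1 m2 Om (F k)).

Definition nonneg (x : R) : Prop := 0 <= x.

Definition deriv_family1 (f : R -> C) (F : nat -> R -> C) : Prop :=
  (forall x, 0 <= x -> F 0%nat x = f x) /\
  (forall k x, 0 <= x -> is_Cderiv_in nonneg (F k) x (F (S k) x)).

Definition in_classC (Mk : nat -> R) (f : R -> C) : Prop :=
  exists F, deriv_family1 f F /\
    exists A, 0 <= A /\ forall k x, 0 <= x -> Cmod (F k x) <= A ^ (S k) * Mk k.

Definition quasi_analytic (Mk : nat -> R) : Prop :=
  forall f, in_classC Mk f -> forall F, deriv_family1 f F ->
    forall x0, 0 <= x0 -> (forall k, F k x0 = C0) ->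
    forall x, 0 <= x -> f x = C0.

(** * The class C_q(D, M~), M i j k = M~_k(i,j) *)
Definition Cq (m1 m2 : nat) (a : option R) (M : nat -> nat -> nat -> R)
    (v : Mfun) : Prop :=
  (exists vx vt, pdx_in m1 m2 (Dom a) v vx /\ pdt_in m1 m2 (Dom a) v vt /\
     cont_in m1 m2 (Dom a) v /\ cont_in m1 m2 (Dom a) vx /\
     cont_in m1 m2 (Dom a) vt) /\
  (exists vx vxx, pdx_in m1 m2 (Dom a) v vx /\ pdx_in m1 m2 (Dom a) vx vxx) /\
  (forall t, 0 <= t -> below_a a t -> exists B, forall x s i j,
     0 < x -> 0 <= s <= t -> (i < m1)%nat -> (j < m2)%nat ->
     Cmod (v x s i j) <= B) /\
  (forall i j, (i < m1)%nat -> (j < m2)%nat ->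
     in_classC (M i j) (fun x => v x 0 i j) /\ quasi_analytic (M i j)) /\
  (forall k, exists eps, 0 < eps /\ below_a a eps /\
     exists F, xderiv_family m1 m2 (Sq eps) v k F).

Definition cubic (m1 m2 : nat) (A : Mat) : Mat := fun i j =>
  Csum m1 (fun q => Cmul (Csum m2 (fun p => Cmul (A i p) (Cconj (A q p)))) (A q j)).

Definition nls (m1 m2 : nat) (a : option R) (v : Mfun) : Prop :=
  exists vx vt vxx,
    pdx_in m1 m2 (Dom a) v vx /\ pdt_in m1 m2 (Dom a) v vt /\
    pdx_in m1 m2 (Dom a) vx vxx /\
    forall x t i j, Dom a x t -> (i < m1)%nat -> (j < m2)%nat ->
      CRscal 2 (vt x t i j) =
      Cmul Ci (Cadd (vxx x t i j) (Copp (CRscal 2 (cubic m1 m2 (v x t) i j)))).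

(** (d_x^k v)_{xt} = (d_x^k v)_{tx} on Om for k <= r *)
Definition mixed_commute (m1 m2 : nat) (Om : R -> R -> Prop)
    (F : nat -> Mfun) (r : nat) : Prop :=
  forall k, (k <= r)%nat -> exists T Y,
    pdt_in m1 m2 Om (F k) T /\ pdx_in m1 m2 Om T Y /\
    pdt_in m1 m2 Om (F (S k)) Y.

From Stdlib Require Import Reals Lra Lia Psatz ClassicalEpsilon.
Require Coquelicot.Coquelicot.
Open Scope R_scope.

(* Let F_k be the k-th x-derivative of a solution v on a small square [0,e]^2.
   The equation gives d_t F_0 = (i/2) (F_2 - 2 v v^* v), and differentiating in x
   (Schwarz's theorem, legitimate since the right-hand side is continuous) turns
   d_t F_k = (i/2) (F_(k+2) - 2 d_x^k (v v^* v)) into the same identity for k+1;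
   this is the commutation (F_k)_xt = (F_k)_tx.  At x = 0 the identity solves for
   F_(k+2)(0,t) through the t-derivative of F_k(0,t) and through d_x^k (v v^* v)(0,t),
   which depends only on F_0(0,t), ..., F_k(0,t).  By induction all F_k(0,.) are
   determined by v(0,.) and v_x(0,.), in particular all x-derivatives of v(.,0) at
   0, and quasi-analyticity of the classes C({M_k}) then determines v(.,0). *)

(** * Limits along neighbourhood bases and one-sided derivatives *)

(* [Nb d p]: the point [p] lies in the basic neighbourhood of radius [d]. *)
Definition lim_along {X : Type} (Nb : R -> X -> Prop) (f : X -> R) (l : R) :=
  forall eps, 0 < eps -> exists d, 0 < d /\ forall p, Nb d p -> Rabs (f p - l) < eps.

Definition nbhd_monotone {X : Type} (Nb : R -> X -> Prop) :=
  forall d d' p, d <= d' -> Nb d p -> Nb d' p.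

Section Limits.
Context {X : Type} (Nb : R -> X -> Prop).

Lemma lim_along_ext f g l :
  (forall d p, Nb d p -> f p = g p) -> lim_along Nb f l -> lim_along Nb g l.
Proof.
  intros E H eps He. destruct (H eps He) as [d [Hd Hp]]. exists d; split; auto.
  intros p Hn. rewrite <- (E d p Hn). auto.
Qed.

Lemma lim_along_const c : lim_along Nb (fun _ => c) c.
Proof.
  intros eps He. exists 1; split; [lra|].
  intros. unfold Rminus. rewrite Rplus_opp_r, Rabs_R0. auto.
Qed.

Lemma lim_along_opp f l : lim_along Nb f l -> lim_along Nb (fun p => - f p) (- l).
Proof.
  intros H eps He. destruct (H eps He) as [d [Hd P]]. exists d; split; auto.
  intros p Hp. replace (- f p - - l) with (- (f p - l)) by ring. rewrite Rabs_Ropp. auto.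
Qed.

Hypothesis Nb_mono : nbhd_monotone Nb.

Lemma lim_along_both f g l m eps1 eps2 : 0 < eps1 -> 0 < eps2 ->
  lim_along Nb f l -> lim_along Nb g m -> exists d, 0 < d /\
    forall p, Nb d p -> Rabs (f p - l) < eps1 /\ Rabs (g p - m) < eps2.
Proof.
  intros H1 H2 Hf Hg.
  destruct (Hf eps1 H1) as [d1 [Hd1 P1]]. destruct (Hg eps2 H2) as [d2 [Hd2 P2]].
  exists (Rmin d1 d2); split; [apply Rmin_glb_lt; auto|].
  intros p Hp. split.
  - apply P1, (Nb_mono _ _ _ (Rmin_l _ _) Hp).
  - apply P2, (Nb_mono _ _ _ (Rmin_r _ _) Hp).
Qed.

Lemma lim_along_plus f g l m :
  lim_along Nb f l -> lim_along Nb g m -> lim_along Nb (fun p => f p + g p) (l + m).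
Proof.
  intros Hf Hg eps He.
  destruct (lim_along_both f g l m (eps/2) (eps/2) ltac:(lra) ltac:(lra) Hf Hg)
    as [d [Hd P]].
  exists d; split; auto. intros p Hp. destruct (P p Hp) as [A B].
  replace (f p + g p - (l + m)) with ((f p - l) + (g p - m)) by ring.
  eapply Rle_lt_trans; [apply Rabs_triang|]. lra.
Qed.

Lemma lim_along_mult f g l m :
  lim_along Nb f l -> lim_along Nb g m -> lim_along Nb (fun p => f p * g p) (l * m).
Proof.
  intros Hf Hg eps He.
  set (K := 1 + Rabs l + Rabs m).
  assert (HK : 0 < K) by (unfold K; pose proof (Rabs_pos l); pose proof (Rabs_pos m); lra).
  set (eta := Rmin 1 (eps / K)).
  assert (Heta : 0 < eta) by (apply Rmin_glb_lt; [lra| apply Rdiv_lt_0_compat; auto]).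
  assert (Heta1 : eta <= 1) by apply Rmin_l.
  assert (HetaK : eta * K <= eps).
  { assert (eta <= eps / K) by apply Rmin_r.
    apply Rmult_le_compat_r with (r := K) in H; [|lra].
    unfold Rdiv in H. rewrite Rmult_assoc, Rinv_l in H; lra. }
  destruct (lim_along_both f g l m eta eta Heta Heta Hf Hg) as [d [Hd P]].
  exists d; split; auto. intros p Hp. destruct (P p Hp) as [A B].
  replace (f p * g p - l * m)
    with ((f p - l) * (g p - m) + l * (g p - m) + m * (f p - l)) by ring.
  eapply Rle_lt_trans; [apply Rabs_triang|].
  eapply Rle_lt_trans; [apply Rplus_le_compat_r; apply Rabs_triang|].
  rewrite !Rabs_mult. unfold K in HetaK.
  pose proof (Rabs_pos l); pose proof (Rabs_pos m);
  pose proof (Rabs_pos (f p - l)); pose proof (Rabs_pos (g p - m)).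
  assert (Rabs (f p - l) * Rabs (g p - m) < eta * 1).
  { apply Rle_lt_trans with (eta * Rabs (g p - m)); [apply Rmult_le_compat_r; lra|].
    apply Rmult_lt_compat_l; lra. }
  assert (Rabs l * Rabs (g p - m) <= Rabs l * eta) by (apply Rmult_le_compat_l; lra).
  assert (Rabs m * Rabs (f p - l) <= Rabs m * eta) by (apply Rmult_le_compat_l; lra).
  nra.
Qed.

End Limits.

Definition punctured_nbhd (S : R -> Prop) (x : R) : R -> R -> Prop :=
  fun d h => h <> 0 /\ Rabs h < d /\ S (x + h).

Lemma punctured_nbhd_monotone S x : nbhd_monotone (punctured_nbhd S x).
Proof. intros d d' h Hd [A [B C]]. repeat split; auto; lra. Qed.

Lemma is_deriv_in_lim S g x l :
  is_deriv_in S g x l <-> lim_along (punctured_nbhd S x) (fun h => (g (x + h) - g x) / h) l.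
Proof.
  split; intros H eps He; destruct (H eps He) as [d [Hd P]]; exists d; split; auto.
  - intros h [A [B C]]. auto.
  - intros h A B C. apply P. repeat split; auto.
Qed.

Section Derivatives.
Variable S : R -> Prop.

Lemma is_deriv_in_continuous g x l : is_deriv_in S g x l ->
  lim_along (punctured_nbhd S x) (fun h => g (x + h)) (g x).
Proof.
  intros H. apply is_deriv_in_lim in H.
  assert (Hid : lim_along (punctured_nbhd S x) (fun h => h) 0).
  { intros eps He. exists eps; split; auto. intros h [A [B C]]. rewrite Rminus_0_r. auto. }
  pose proof (punctured_nbhd_monotone S x) as Hm.
  pose proof (lim_along_plus _ Hm _ _ _ _ (lim_along_const _ (g x))
                (lim_along_mult _ Hm _ _ _ _ Hid H)) as Hp.
  rewrite Rmult_0_l, Rplus_0_r in Hp.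
  eapply lim_along_ext; [|exact Hp]. intros d h [A _]. simpl. field. auto.
Qed.

Lemma is_deriv_in_plus f g x l m : is_deriv_in S f x l -> is_deriv_in S g x m ->
  is_deriv_in S (fun y => f y + g y) x (l + m).
Proof.
  rewrite !is_deriv_in_lim. intros Hf Hg.
  eapply lim_along_ext;
    [|exact (lim_along_plus _ (punctured_nbhd_monotone S x) _ _ _ _ Hf Hg)].
  intros d h _. simpl. unfold Rdiv. ring.
Qed.

Lemma is_deriv_in_opp f x l : is_deriv_in S f x l ->
  is_deriv_in S (fun y => - f y) x (- l).
Proof.
  rewrite !is_deriv_in_lim. intros Hf.
  eapply lim_along_ext; [|exact (lim_along_opp _ _ _ Hf)].
  intros d h _. simpl. unfold Rdiv. ring.
Qed.

Lemma is_deriv_in_const c x : is_deriv_in S (fun _ => c) x 0.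
Proof.
  apply is_deriv_in_lim. eapply lim_along_ext; [|exact (lim_along_const _ 0)].
  intros d h _. simpl. unfold Rdiv. ring.
Qed.

Lemma is_deriv_in_scal c x : is_deriv_in S (fun y => c * y) x c.
Proof.
  apply is_deriv_in_lim. eapply lim_along_ext; [|exact (lim_along_const _ c)].
  intros d h [A _]. simpl. field. auto.
Qed.

Lemma is_deriv_in_mult f g x l m : is_deriv_in S f x l -> is_deriv_in S g x m ->
  is_deriv_in S (fun y => f y * g y) x (l * g x + f x * m).
Proof.
  intros Hf Hg. pose proof (is_deriv_in_continuous _ _ _ Hg) as Hc.
  rewrite is_deriv_in_lim in *. pose proof (punctured_nbhd_monotone S x) as Hm.
  eapply lim_along_ext;
    [|exact (lim_along_plus _ Hm _ _ _ _ (lim_along_mult _ Hm _ _ _ _ Hf Hc)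
              (lim_along_mult _ Hm _ _ _ _ (lim_along_const _ (f x)) Hg))].
  intros d h _. simpl. unfold Rdiv. ring.
Qed.

Lemma is_deriv_in_ext g g' x l : (forall y, S y -> g y = g' y) -> S x ->
  is_deriv_in S g x l -> is_deriv_in S g' x l.
Proof.
  intros E Sx H eps He. destruct (H eps He) as [d [Hd P]]. exists d; split; auto.
  intros h A B C. rewrite <- (E _ C), <- (E _ Sx). auto.
Qed.

Lemma is_deriv_in_unique g x l1 l2 :
  (forall d, 0 < d -> exists h, punctured_nbhd S x d h) ->
  is_deriv_in S g x l1 -> is_deriv_in S g x l2 -> l1 = l2.
Proof.
  intros Hp H1 H2. destruct (Req_dec l1 l2) as [|Hne]; auto. exfalso.
  set (eps := Rabs (l1 - l2) / 2).
  assert (He : 0 < eps) by (apply Rdiv_lt_0_compat; [apply Rabs_pos_lt; lra|lra]).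
  rewrite is_deriv_in_lim in H1, H2.
  destruct (lim_along_both _ (punctured_nbhd_monotone S x) _ _ _ _ _ _ He He H1 H2)
    as [d [Hd P]].
  destruct (Hp d Hd) as [h Hh]. destruct (P h Hh) as [Q1 Q2].
  assert (Rabs (l1 - l2) <= Rabs ((g (x + h) - g x) / h - l1)
                            + Rabs ((g (x + h) - g x) / h - l2)).
  { replace (l1 - l2)
      with (- ((g (x + h) - g x) / h - l1) + ((g (x + h) - g x) / h - l2)) by ring.
    eapply Rle_trans; [apply Rabs_triang|]. rewrite Rabs_Ropp. lra. }
  unfold eps in *. lra.
Qed.

End Derivatives.

Lemma is_deriv_in_subset (S S' : R -> Prop) g x l : (forall y, S' y -> S y) ->
  is_deriv_in S g x l -> is_deriv_in S' g x l.
Proof.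
  intros HS H eps He. destruct (H eps He) as [d [Hd P]]. exists d; split; auto.
Qed.

Lemma interval_punctured_nonempty lo hi x : lo < hi -> lo <= x <= hi ->
  forall d, 0 < d -> exists h, h <> 0 /\ Rabs h < d /\ lo <= x + h <= hi.
Proof.
  intros Hlh Hx d Hd. destruct (Rlt_le_dec x hi) as [Hlt|Hge].
  - exists (Rmin (d/2) (hi - x)).
    assert (0 < Rmin (d/2) (hi - x)) by (apply Rmin_glb_lt; lra).
    pose proof (Rmin_l (d/2) (hi - x)); pose proof (Rmin_r (d/2) (hi - x)).
    rewrite Rabs_pos_eq; [|lra]. repeat split; lra.
  - exists (- Rmin (d/2) (hi - lo)).
    assert (0 < Rmin (d/2) (hi - lo)) by (apply Rmin_glb_lt; lra).
    pose proof (Rmin_l (d/2) (hi - lo)); pose proof (Rmin_r (d/2) (hi - lo)).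
    rewrite Rabs_Ropp, Rabs_pos_eq; [|lra]. repeat split; lra.
Qed.

Definition clamp a b y := Rmax a (Rmin b y).

Lemma clamp_in a b y : a <= b -> a <= clamp a b y <= b.
Proof. intros. unfold clamp, Rmax, Rmin. repeat destruct Rle_dec; lra. Qed.

Lemma clamp_id a b y : a <= y <= b -> clamp a b y = y.
Proof. intros. unfold clamp, Rmax, Rmin. repeat destruct Rle_dec; lra. Qed.

Lemma clamp_dist a b y x : a <= x <= b -> Rabs (clamp a b y - x) <= Rabs (y - x).
Proof.
  intros. unfold clamp, Rmax, Rmin, Rabs.
  repeat destruct Rle_dec; repeat destruct Rcase_abs; lra.
Qed.

Section Clamped.
Variables (a b : R) (g : R -> R).
Let I := fun z => a <= z <= b.

Lemma derivable_pt_lim_clamp x l : a < x < b -> is_deriv_in I g x l ->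
  derivable_pt_lim (fun y => g (clamp a b y)) x l.
Proof.
  intros Hx Hd eps He. destruct (Hd eps He) as [d [Hd0 P]].
  assert (Hm : 0 < Rmin d (Rmin (x - a) (b - x)))
    by (apply Rmin_glb_lt; [auto| apply Rmin_glb_lt; lra]).
  exists (mkposreal _ Hm). intros h Hh0 Hh. simpl in Hh.
  pose proof (Rmin_l d (Rmin (x - a) (b - x))); pose proof (Rmin_r d (Rmin (x - a) (b - x))).
  pose proof (Rmin_l (x - a) (b - x)); pose proof (Rmin_r (x - a) (b - x)).
  assert (Hh' : - (x - a) < h < b - x)
    by (pose proof (Rle_abs h); pose proof (Rle_abs (- h)); rewrite Rabs_Ropp in *; lra).
  rewrite !clamp_id by lra. apply P; unfold I; auto; lra.
Qed.

Lemma continuity_pt_clamp x l : a <= x <= b -> is_deriv_in I g x l ->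
  continuity_pt (fun y : R => g (clamp a b y)) x.
Proof.
  intros Hx Hd.
  unfold continuity_pt, Rderiv.continue_in, Rlimit.limit1_in, Rlimit.limit_in.
  intros eps He. destruct (is_deriv_in_continuous _ _ _ _ Hd eps He) as [d [Hd0 P]].
  exists d; split; auto. intros y [_ Hy]. simpl in *. unfold Rdist in *.
  rewrite (clamp_id a b x) by lra.
  destruct (Req_dec (clamp a b y) x) as [E|E].
  - rewrite E. unfold Rminus. rewrite Rplus_opp_r, Rabs_R0. auto.
  - specialize (P (clamp a b y - x)).
    replace (x + (clamp a b y - x)) with (clamp a b y) in P by ring.
    apply P. split; [lra|split].
    + eapply Rle_lt_trans; [apply clamp_dist; lra|auto].
    + replace (x + (clamp a b y - x)) with (clamp a b y) by ring. apply clamp_in; lra.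
Qed.

(* A one-sided derivative at the endpoints suffices: [g] is extended constantly
   outside [[a, b]] so that Coquelicot's mean value theorem applies. *)
Lemma deriv_bound_increment dg K : a <= b ->
  (forall y, I y -> is_deriv_in I g y (dg y)) -> (forall y, I y -> Rabs (dg y) <= K) ->
  Rabs (g b - g a) <= K * (b - a).
Proof.
  intros Hab Hd HK. destruct (Req_dec a b) as [<-|Hne].
  { unfold Rminus. rewrite !Rplus_opp_r, Rabs_R0, Rmult_0_r. lra. }
  destruct (Coquelicot.Derive.MVT_gen (fun y : R => g (clamp a b y)) a b dg) as [c [Hc Heq]].
  - rewrite Rmin_left, Rmax_right by lra. intros x Hx.
    apply Coquelicot.Derive.is_derive_Reals, derivable_pt_lim_clamp; auto. apply Hd. unfold I; lra.
  - rewrite Rmin_left, Rmax_right by lra. intros x Hx.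
    exact (continuity_pt_clamp x _ Hx (Hd x Hx)).
  - rewrite Rmin_left, Rmax_right in Hc by lra.
    rewrite !clamp_id in Heq by lra. rewrite Heq, Rabs_mult, (Rabs_pos_eq (b - a)) by lra.
    apply Rmult_le_compat_r; [lra|]. apply HK, Hc.
Qed.

End Clamped.

Lemma Rabs_between x y z : Rmin x y <= z <= Rmax x y -> Rabs (z - x) <= Rabs (y - x).
Proof.
  unfold Rmin, Rmax, Rabs. intros. repeat destruct Rle_dec; repeat destruct Rcase_abs; lra.
Qed.

Lemma between_interval lo hi x y z :
  lo <= x <= hi -> lo <= y <= hi -> Rmin x y <= z <= Rmax x y -> lo <= z <= hi.
Proof. unfold Rmin, Rmax. intros. repeat destruct Rle_dec; lra. Qed.

Lemma mean_value_bound (S : R -> Prop) g dg K x y :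
  (forall z, Rmin x y <= z <= Rmax x y -> S z /\ is_deriv_in S g z (dg z)) ->
  (forall z, Rmin x y <= z <= Rmax x y -> Rabs (dg z) <= K) ->
  Rabs (g y - g x) <= K * Rabs (y - x).
Proof.
  intros Hd HK.
  assert (Hsub : forall u v, (forall z, u <= z <= v -> S z /\ is_deriv_in S g z (dg z)) ->
            forall z, u <= z <= v -> is_deriv_in (fun z => u <= z <= v) g z (dg z))
    by (intros u v H z Hz; eapply is_deriv_in_subset; [|apply H; auto]; intros; apply H; auto).
  destruct (Rle_dec x y) as [Hxy|Hxy].
  - rewrite Rmin_left, Rmax_right in * by lra. rewrite (Rabs_pos_eq (y - x)) by lra.
    apply (deriv_bound_increment _ _ g dg K); auto.
  - rewrite Rmin_right, Rmax_left in * by lra.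
    rewrite Rabs_minus_sym, (Rabs_minus_sym y x), (Rabs_pos_eq (x - y)) by lra.
    apply (deriv_bound_increment _ _ g dg K); auto; lra.
Qed.

Lemma Rabs_div_le a b c : b <> 0 -> Rabs a <= Rabs b * c -> Rabs (a / b) <= c.
Proof.
  intros Hb H. pose proof (Rabs_pos_lt b Hb).
  unfold Rdiv. rewrite Rabs_mult, Rabs_inv.
  apply Rmult_le_reg_l with (Rabs b); auto.
  rewrite <- Rmult_assoc, (Rmult_comm (Rabs b)), Rmult_assoc, Rinv_r; lra.
Qed.

(** * Mixed partial derivatives on the square *)

Definition RF := R -> R -> R.

Section Square.
Variable e : R.

Definition dx_sq (u u' : RF) : Prop :=
  forall x t, Sq e x t -> is_deriv_in (fun y => Sq e y t) (fun y => u y t) x (u' x t).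
Definition dt_sq (u u' : RF) : Prop :=
  forall x t, Sq e x t -> is_deriv_in (fun s => Sq e x s) (fun s => u x s) t (u' x t).
Definition sq_nbhd (x t : R) : R -> R * R -> Prop :=
  fun d p => Sq e (fst p) (snd p) /\ Rabs (fst p - x) < d /\ Rabs (snd p - t) < d.
Definition cont_sq (u : RF) : Prop :=
  forall x t, Sq e x t -> lim_along (sq_nbhd x t) (fun p => u (fst p) (snd p)) (u x t).

Lemma sq_nbhd_monotone x t : nbhd_monotone (sq_nbhd x t).
Proof. intros d d' p Hd [A [B C]]. split; [exact A|split; lra]. Qed.

Section Schwarz.
Variables (u T Y : RF) (x t d eta : R).
Hypothesis HT : dt_sq u T.
Hypothesis HY : dx_sq T Y.
Hypothesis HYnear : forall p, sq_nbhd x t d p -> Rabs (Y (fst p) (snd p) - Y x t) < eta.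

Lemma x_increment_bound h tau : 0 <= x <= e -> 0 <= x + h <= e -> 0 <= tau <= e ->
  Rabs h < d -> Rabs (tau - t) < d ->
  Rabs (T (x + h) tau - T x tau - h * Y x t) <= Rabs h * eta.
Proof.
  intros Hx Hxh Htau Hh Htaut.
  assert (Hz : forall z, Rmin x (x + h) <= z <= Rmax x (x + h) -> Sq e z tau)
    by (intros z Hz; split; [eapply between_interval; [exact Hx|exact Hxh|exact Hz]|auto]).
  replace (T (x + h) tau - T x tau - h * Y x t)
    with (T (x + h) tau - Y x t * (x + h) - (T x tau - Y x t * x)) by ring.
  replace (Rabs h * eta) with (eta * Rabs (x + h - x))
    by (rewrite Rmult_comm; f_equal; f_equal; ring).
  apply (mean_value_bound (fun y => Sq e y tau) (fun y => T y tau - Y x t * y)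
           (fun z => Y z tau + - Y x t)).
  - intros z Hzb. split; [auto|]. apply is_deriv_in_plus; [apply HY; auto|].
    apply is_deriv_in_opp, is_deriv_in_scal.
  - intros z Hzb. left. apply (HYnear (z, tau)). split; [apply Hz; auto|simpl; split; auto].
    pose proof (Rabs_between _ _ _ Hzb). replace (x + h - x) with h in * by ring. lra.
Qed.

Lemma double_increment_bound h s : 0 <= x <= e -> 0 <= x + h <= e ->
  0 <= t <= e -> 0 <= t + s <= e -> Rabs h < d -> Rabs s < d ->
  Rabs (u (x + h) (t + s) - u x (t + s) - (u (x + h) t - u x t) - h * s * Y x t)
    <= Rabs h * eta * Rabs s.
Proof.
  intros Hx Hxh Ht Hts Hh Hs.
  assert (Hz : forall z, Rmin t (t + s) <= z <= Rmax t (t + s) -> 0 <= z <= e)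
    by (intros z Hz; eapply between_interval; [exact Ht|exact Hts|exact Hz]).
  replace (u (x + h) (t + s) - u x (t + s) - (u (x + h) t - u x t) - h * s * Y x t)
    with ((u (x + h) (t + s) - u x (t + s) - h * Y x t * (t + s))
          - (u (x + h) t - u x t - h * Y x t * t)) by ring.
  replace (Rabs s) with (Rabs (t + s - t)) by (f_equal; ring).
  apply (mean_value_bound (fun z => 0 <= z <= e)
           (fun z => u (x + h) z - u x z - h * Y x t * z)
           (fun z => T (x + h) z + - T x z + - (h * Y x t))).
  - intros z Hzb. split; [auto|].
    assert (Sub : forall y, 0 <= y <= e -> forall w, 0 <= w <= e -> Sq e w y)
      by (intros; split; auto).
    repeat apply is_deriv_in_plus; try apply is_deriv_in_opp.
    + eapply is_deriv_in_subset; [|apply HT, Sub; auto]. intros y Hy. split; auto.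
    + eapply is_deriv_in_subset; [|apply HT, Sub; auto]. intros y Hy. split; auto.
    + apply is_deriv_in_scal.
  - intros z Hzb. unfold Rminus in *.
    replace (T (x + h) z + - T x z + - (h * Y x t)) with (T (x + h) z - T x z - h * Y x t)
      by ring.
    apply x_increment_bound; auto.
    pose proof (Rabs_between _ _ _ Hzb). replace (t + s - t) with s in * by ring. lra.
Qed.

End Schwarz.

Lemma schwarz_sq u U T Y : 0 < e ->
  dx_sq u U -> dt_sq u T -> dx_sq T Y -> cont_sq Y -> dt_sq U Y.
Proof.
  intros He HU HT HY HcY x t Hxt eps Heps.
  destruct (HcY x t Hxt (eps/2)) as [d [Hd Hnear]]; [lra|].
  exists d; split; auto. intros s Hs0 Hsd Hxs.
  destruct Hxt as [Hx Ht]. destruct Hxs as [_ Hts].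
  assert (HUs : Rabs (U x (t + s) - U x t - s * Y x t) <= Rabs s * (eps / 2)).
  { (* The bound on the double difference quotient is uniform in h; let h -> 0. *)
    apply Rle_plus_epsilon. intros eta Heta.
    destruct (HU x (t + s) (conj Hx Hts) (eta/2)) as [d1 [Hd1 P1]]; [lra|].
    destruct (HU x t (conj Hx Ht) (eta/2)) as [d2 [Hd2 P2]]; [lra|].
    destruct (interval_punctured_nonempty 0 e x He Hx (Rmin d (Rmin d1 d2)))
      as [h [Hh0 [Hhd Hxh]]]; [repeat apply Rmin_glb_lt; auto|].
    pose proof (Rmin_l d (Rmin d1 d2)); pose proof (Rmin_r d (Rmin d1 d2));
    pose proof (Rmin_l d1 d2); pose proof (Rmin_r d1 d2).
    specialize (P1 h Hh0 ltac:(lra) (conj Hxh Hts)).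
    specialize (P2 h Hh0 ltac:(lra) (conj Hxh Ht)). simpl in P1, P2.
    assert (Hq : Rabs ((u (x + h) (t + s) - u x (t + s)) / h - (u (x + h) t - u x t) / h
                       - s * Y x t) <= Rabs s * (eps / 2)).
    { replace ((u (x + h) (t + s) - u x (t + s)) / h - (u (x + h) t - u x t) / h - s * Y x t)
        with ((u (x + h) (t + s) - u x (t + s) - (u (x + h) t - u x t) - h * s * Y x t) / h)
        by (field; auto).
      apply Rabs_div_le; auto.
      replace (Rabs h * (Rabs s * (eps / 2))) with (Rabs h * (eps / 2) * Rabs s) by ring.
      apply (double_increment_bound u T Y x t d); auto; lra. }
    set (q1 := (u (x + h) (t + s) - u x (t + s)) / h) in *.
    set (q0 := (u (x + h) t - u x t) / h) in *.
    replace (U x (t + s) - U x t - s * Y x t)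
      with ((q1 - q0 - s * Y x t) - (q1 - U x (t + s)) + (q0 - U x t)) by ring.
    eapply Rle_trans; [apply Rabs_triang|].
    eapply Rle_trans; [apply Rplus_le_compat_r, Rabs_triang|].
    rewrite Rabs_Ropp. lra. }
  replace ((U x (t + s) - U x t) / s - Y x t)
    with ((U x (t + s) - U x t - s * Y x t) / s) by (field; auto).
  eapply Rle_lt_trans; [apply Rabs_div_le; eauto|lra].
Qed.

End Square.

(** * The algebra of x-jets on the square *)

Section SquareAlgebra.
Variable e : R.

Lemma cont_sq_plus u w : cont_sq e u -> cont_sq e w -> cont_sq e (fun x t => u x t + w x t).
Proof.
  intros Hu Hw x t H.
  exact (lim_along_plus _ (sq_nbhd_monotone e x t) _ _ _ _ (Hu x t H) (Hw x t H)).
Qed.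
Lemma cont_sq_mult u w : cont_sq e u -> cont_sq e w -> cont_sq e (fun x t => u x t * w x t).
Proof.
  intros Hu Hw x t H.
  exact (lim_along_mult _ (sq_nbhd_monotone e x t) _ _ _ _ (Hu x t H) (Hw x t H)).
Qed.
Lemma cont_sq_opp u : cont_sq e u -> cont_sq e (fun x t => - u x t).
Proof. intros Hu x t H. exact (lim_along_opp _ _ _ (Hu x t H)). Qed.
Lemma cont_sq_const c : cont_sq e (fun _ _ => c).
Proof. intros x t H. exact (lim_along_const _ c). Qed.
Lemma cont_sq_ext u w : (forall x t, Sq e x t -> u x t = w x t) -> cont_sq e u -> cont_sq e w.
Proof.
  intros E Hu x t H. rewrite <- (E x t H). eapply lim_along_ext; [|exact (Hu x t H)].
  intros d p [A _]. apply E; auto.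
Qed.

Lemma dx_sq_plus u u' w w' : dx_sq e u u' -> dx_sq e w w' ->
  dx_sq e (fun x t => u x t + w x t) (fun x t => u' x t + w' x t).
Proof. intros Hu Hw x t H. exact (is_deriv_in_plus _ _ _ _ _ _ (Hu x t H) (Hw x t H)). Qed.
Lemma dx_sq_mult u u' w w' : dx_sq e u u' -> dx_sq e w w' ->
  dx_sq e (fun x t => u x t * w x t) (fun x t => u' x t * w x t + u x t * w' x t).
Proof. intros Hu Hw x t H. exact (is_deriv_in_mult _ _ _ _ _ _ (Hu x t H) (Hw x t H)). Qed.
Lemma dx_sq_opp u u' : dx_sq e u u' -> dx_sq e (fun x t => - u x t) (fun x t => - u' x t).
Proof. intros Hu x t H. exact (is_deriv_in_opp _ _ _ _ (Hu x t H)). Qed.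
Lemma dx_sq_const c : dx_sq e (fun _ _ => c) (fun _ _ => 0).
Proof. intros x t H. exact (is_deriv_in_const _ c x). Qed.
Lemma dx_sq_ext u u' w w' : (forall x t, Sq e x t -> u x t = w x t) ->
  (forall x t, Sq e x t -> u' x t = w' x t) -> dx_sq e u u' -> dx_sq e w w'.
Proof.
  intros E E' Hu x t H. rewrite <- (E' x t H).
  eapply is_deriv_in_ext; [|exact H|exact (Hu x t H)]. intros y Hy. apply E; auto.
Qed.

Lemma dx_sq_lin c u u' w w' : dx_sq e u u' -> dx_sq e w w' ->
  dx_sq e (fun x t => c * u x t + w x t) (fun x t => c * u' x t + w' x t).
Proof.
  intros Hu Hw.
  eapply dx_sq_ext; [| |exact (dx_sq_plus _ _ _ _ (dx_sq_mult _ _ _ _ (dx_sq_const c) Hu) Hw)];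
    intros; simpl; ring.
Qed.

Lemma cont_sq_lin c u w : cont_sq e u -> cont_sq e w -> cont_sq e (fun x t => c * u x t + w x t).
Proof. intros Hu Hw. apply cont_sq_plus; auto. apply cont_sq_mult; auto. apply cont_sq_const. Qed.

Hypothesis He : 0 < e.

Lemma dx_sq_unique u u1 u2 : dx_sq e u u1 -> dx_sq e u u2 ->
  forall x t, Sq e x t -> u1 x t = u2 x t.
Proof.
  intros H1 H2 x t H. eapply is_deriv_in_unique; [|exact (H1 x t H)|exact (H2 x t H)].
  intros d Hd. destruct H as [Hx Ht].
  destruct (interval_punctured_nonempty 0 e x He Hx d Hd) as [h [A [B C]]].
  exists h. exact (conj A (conj B (conj C Ht))).
Qed.

End SquareAlgebra.

Section XJets.
Variable e : R.

(* Existentially nested derivatives, rather than a named family, make closure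
   under products a plain induction on the order. *)
Fixpoint xsmooth (n : nat) (u : RF) : Prop :=
  cont_sq e u /\
  match n with O => True | S m => exists u', dx_sq e u u' /\ xsmooth m u' end.

Fixpoint edge_agree (n : nat) (u w : RF) : Prop :=
  (forall t, 0 <= t <= e -> u 0 t = w 0 t) /\
  match n with
  | O => True
  | S m => exists u' w', dx_sq e u u' /\ dx_sq e w w' /\ edge_agree m u' w'
  end.

Lemma xsmooth_cont n u : xsmooth n u -> cont_sq e u.
Proof. destruct n; intros [H _]; exact H. Qed.

Lemma xsmooth_pred n u : xsmooth (S n) u -> xsmooth n u.
Proof.
  revert u; induction n; intros u [Hc [u' [Hd Hg]]]; split; auto.
  exists u'; split; auto.
Qed.

Lemma xsmooth_plus n u w : xsmooth n u -> xsmooth n w -> xsmooth n (fun x t => u x t + w x t).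
Proof.
  revert u w; induction n; intros u w [Hu Hu'] [Hw Hw']; split; try apply cont_sq_plus; auto.
  destruct Hu' as [u' [Du Gu]]; destruct Hw' as [w' [Dw Gw]].
  eexists; split; [apply dx_sq_plus; eauto|]. apply IHn; auto.
Qed.

Lemma xsmooth_opp n u : xsmooth n u -> xsmooth n (fun x t => - u x t).
Proof.
  revert u; induction n; intros u [Hu Hu']; split; try apply cont_sq_opp; auto.
  destruct Hu' as [u' [Du Gu]].
  eexists; split; [apply dx_sq_opp; eauto|]. apply IHn; auto.
Qed.

Lemma xsmooth_const n c : xsmooth n (fun _ _ => c).
Proof.
  revert c; induction n; intros c; split; try apply cont_sq_const; auto.
  eexists; split; [apply dx_sq_const|]. apply IHn.
Qed.

Lemma xsmooth_mult n u w : xsmooth n u -> xsmooth n w -> xsmooth n (fun x t => u x t * w x t).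
Proof.
  revert u w; induction n; intros u w Gu Gw;
    (split; [apply cont_sq_mult; [apply Gu|apply Gw]|]); auto.
  pose proof (xsmooth_pred _ _ Gu) as Gu0. pose proof (xsmooth_pred _ _ Gw) as Gw0.
  destruct Gu as [_ [u' [Du Gu']]]; destruct Gw as [_ [w' [Dw Gw']]].
  eexists; split; [apply dx_sq_mult; eauto|].
  apply xsmooth_plus; apply IHn; auto.
Qed.

Lemma edge_agree_pred n u w : edge_agree (S n) u w -> edge_agree n u w.
Proof.
  revert u w; induction n; intros u w [Hc [u' [w' [Hd [Hd' Hg]]]]]; split; auto.
  exists u', w'; repeat split; auto.
Qed.

Lemma edge_agree_plus n u w u2 w2 : edge_agree n u w -> edge_agree n u2 w2 ->
  edge_agree n (fun x t => u x t + u2 x t) (fun x t => w x t + w2 x t).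
Proof.
  revert u w u2 w2; induction n; intros u w u2 w2 [Hu Hu'] [Hw Hw'];
    (split; [intros t Ht; rewrite Hu, Hw; auto|]); auto.
  destruct Hu' as [u' [w' [D1 [D2 G]]]]; destruct Hw' as [u2' [w2' [D3 [D4 G2]]]].
  do 2 eexists; split; [apply dx_sq_plus; eauto|split; [apply dx_sq_plus; eauto|]].
  apply IHn; auto.
Qed.

Lemma edge_agree_opp n u w : edge_agree n u w ->
  edge_agree n (fun x t => - u x t) (fun x t => - w x t).
Proof.
  revert u w; induction n; intros u w [Hu Hu'];
    (split; [intros t Ht; rewrite Hu; auto|]); auto.
  destruct Hu' as [u' [w' [D1 [D2 G]]]].
  do 2 eexists; split; [apply dx_sq_opp; eauto|split; [apply dx_sq_opp; eauto|]].
  apply IHn; auto.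
Qed.

Lemma edge_agree_const n c : edge_agree n (fun _ _ => c) (fun _ _ => c).
Proof.
  revert c; induction n; intros c; split; auto.
  do 2 eexists; split; [apply dx_sq_const|split; [apply dx_sq_const|]]. apply IHn.
Qed.

Lemma edge_agree_mult n u w u2 w2 : edge_agree n u w -> edge_agree n u2 w2 ->
  edge_agree n (fun x t => u x t * u2 x t) (fun x t => w x t * w2 x t).
Proof.
  revert u w u2 w2; induction n; intros u w u2 w2 A1 A2;
    (split; [intros t Ht; rewrite (proj1 A1), (proj1 A2); auto|]); auto.
  pose proof (edge_agree_pred _ _ _ A1) as A10. pose proof (edge_agree_pred _ _ _ A2) as A20.
  destruct A1 as [_ [u' [w' [D1 [D2 G]]]]]; destruct A2 as [_ [u2' [w2' [D3 [D4 G2]]]]].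
  do 2 eexists; split; [apply dx_sq_mult; eauto|split; [apply dx_sq_mult; eauto|]].
  apply edge_agree_plus; apply IHn; auto.
Qed.

Lemma edge_agree_ext n u w u2 w2 : (forall x t, Sq e x t -> u x t = u2 x t) ->
  (forall x t, Sq e x t -> w x t = w2 x t) -> edge_agree n u w -> edge_agree n u2 w2.
Proof.
  intros E1 E2 HA. destruct n; destruct HA as [H0 H1];
    (split; [intros t Ht; rewrite <- E1, <- E2 by (split; lra); auto|]); auto.
  destruct H1 as [u' [w' [D1 [D2 G]]]].
  exists u', w'; split; [|split]; auto; eapply dx_sq_ext; eauto.
Qed.

Definition xchain (n : nat) (D : nat -> RF) : Prop :=
  (forall j, (j < n)%nat -> dx_sq e (D j) (D (S j))) /\
  (forall j, (j <= n)%nat -> cont_sq e (D j)).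

Lemma xchain_xsmooth n D : xchain n D -> forall m j, (j + m <= n)%nat -> xsmooth m (D j).
Proof.
  intros [H1 H2] m. induction m; intros j Hj; (split; [apply H2; lia|]); auto.
  exists (D (S j)); split; [apply H1; lia|]. apply IHm; lia.
Qed.

Lemma xchain_edge_agree n D E k : xchain n D -> xchain n E -> (k <= n)%nat ->
  (forall j t, (j <= k)%nat -> 0 <= t <= e -> D j 0 t = E j 0 t) ->
  forall m j, (j + m <= k)%nat -> edge_agree m (D j) (E j).
Proof.
  intros [H1 _] [H3 _] Hk HA m. induction m; intros j Hj;
    (split; [intros; apply HA; auto; lia|]); auto.
  exists (D (S j)), (E (S j)); split; [apply H1; lia|split; [apply H3; lia|]].
  apply IHm; lia.
Qed.

End XJets.

Definition re_entry (U : Mfun) (i j : nat) : RF := fun x t => fst (U x t i j).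
Definition im_entry (U : Mfun) (i j : nat) : RF := fun x t => snd (U x t i j).

Definition entrywise (m1 m2 : nat) (Rel : RF -> RF -> Prop) (U V : Mfun) : Prop :=
  forall i j, (i < m1)%nat -> (j < m2)%nat ->
    Rel (re_entry U i j) (re_entry V i j) /\ Rel (im_entry U i j) (im_entry V i j).

Section ComplexLift.
Variable Rel : RF -> RF -> Prop.
Hypothesis Rel_plus : forall u w u2 w2, Rel u w -> Rel u2 w2 ->
  Rel (fun x t => u x t + u2 x t) (fun x t => w x t + w2 x t).
Hypothesis Rel_mult : forall u w u2 w2, Rel u w -> Rel u2 w2 ->
  Rel (fun x t => u x t * u2 x t) (fun x t => w x t * w2 x t).
Hypothesis Rel_opp : forall u w, Rel u w -> Rel (fun x t => - u x t) (fun x t => - w x t).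
Hypothesis Rel_const : forall c, Rel (fun _ _ => c) (fun _ _ => c).

Definition Crel (f g : R -> R -> C) : Prop :=
  Rel (fun x t => fst (f x t)) (fun x t => fst (g x t)) /\
  Rel (fun x t => snd (f x t)) (fun x t => snd (g x t)).

Lemma Crel_add f g f' g' : Crel f f' -> Crel g g' ->
  Crel (fun x t => Cadd (f x t) (g x t)) (fun x t => Cadd (f' x t) (g' x t)).
Proof. intros [A B] [A' B']. split; simpl; apply Rel_plus; auto. Qed.

Lemma Crel_mul f g f' g' : Crel f f' -> Crel g g' ->
  Crel (fun x t => Cmul (f x t) (g x t)) (fun x t => Cmul (f' x t) (g' x t)).
Proof.
  intros [A B] [A' B']. split; simpl.
  - unfold Rminus. apply Rel_plus; [|apply Rel_opp]; apply Rel_mult; auto.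
  - apply Rel_plus; apply Rel_mult; auto.
Qed.

Lemma Crel_conj f f' : Crel f f' -> Crel (fun x t => Cconj (f x t)) (fun x t => Cconj (f' x t)).
Proof. intros [A B]. split; simpl; auto. Qed.

Lemma Crel_sum n (g g' : R -> R -> nat -> C) :
  (forall q, (q < n)%nat -> Crel (fun x t => g x t q) (fun x t => g' x t q)) ->
  Crel (fun x t => Csum n (g x t)) (fun x t => Csum n (g' x t)).
Proof.
  induction n; intros H; [split; simpl; apply Rel_const|].
  apply Crel_add.
  - apply IHn. intros; apply H; lia.
  - apply H; lia.
Qed.

Lemma entrywise_cubic m1 m2 A B : entrywise m1 m2 Rel A B ->
  entrywise m1 m2 Rel (fun x t => cubic m1 m2 (A x t)) (fun x t => cubic m1 m2 (B x t)).
Proof.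
  intros H i j Hi Hj. unfold cubic.
  apply (Crel_sum m1). intros q Hq.
  apply Crel_mul; [|apply H; auto].
  apply (Crel_sum m2). intros p Hp.
  apply Crel_mul; [apply H; auto|].
  apply Crel_conj, H; auto.
Qed.

End ComplexLift.

Section Entries.
Variables (m1 m2 : nat) (e : R).

Lemma pdx_in_Sq_entrywise U U' : pdx_in m1 m2 (Sq e) U U' <-> entrywise m1 m2 (dx_sq e) U U'.
Proof.
  split.
  - intros H i j Hi Hj. split; intros x t Hxt; apply (H x t i j Hxt Hi Hj).
  - intros H x t i j Hxt Hi Hj. split; apply (H i j Hi Hj); auto.
Qed.

Lemma pdt_in_Sq_entrywise U U' : pdt_in m1 m2 (Sq e) U U' <-> entrywise m1 m2 (dt_sq e) U U'.
Proof.
  split.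
  - intros H i j Hi Hj. split; intros x t Hxt; apply (H x t i j Hxt Hi Hj).
  - intros H x t i j Hxt Hi Hj. split; apply (H i j Hi Hj); auto.
Qed.

Lemma cont_in_Sq_entrywise U :
  cont_in m1 m2 (Sq e) U -> entrywise m1 m2 (fun u _ => cont_sq e u) U U.
Proof.
  intros H i j Hi Hj. split; intros x t Hxt eps He;
    destruct (H x t i j Hxt Hi Hj eps He) as [d [Hd P]]; exists d; (split; [exact Hd|]);
    intros [y s] [A [B C']]; specialize (P y s A B C');
    pose proof (Coquelicot.Complex.Rmax_Cmod (Cadd (U y s i j) (Copp (U x t i j)))) as Hm;
    (eapply Rle_lt_trans; [|exact P]); (eapply Rle_trans; [|exact Hm]);
    [apply Rmax_l|apply Rmax_r].
Qed.

Lemma pdx_in_Sq_ext U U' W W' :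
  (forall x t, Sq e x t -> Meq m1 m2 (U x t) (W x t)) ->
  (forall x t, Sq e x t -> Meq m1 m2 (U' x t) (W' x t)) ->
  pdx_in m1 m2 (Sq e) U U' -> pdx_in m1 m2 (Sq e) W W'.
Proof.
  intros E E' H x t i j Hxt Hi Hj. rewrite <- (E' x t Hxt i j Hi Hj).
  destruct (H x t i j Hxt Hi Hj) as [H1 H2].
  split; (eapply is_deriv_in_ext; [|exact Hxt|eassumption]);
    intros y Hy; simpl; rewrite (E y t Hy i j Hi Hj); reflexivity.
Qed.

Lemma pdt_in_Sq_ext U U' W W' :
  (forall x t, Sq e x t -> Meq m1 m2 (U x t) (W x t)) ->
  (forall x t, Sq e x t -> Meq m1 m2 (U' x t) (W' x t)) ->
  pdt_in m1 m2 (Sq e) U U' -> pdt_in m1 m2 (Sq e) W W'.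
Proof.
  intros E E' H x t i j Hxt Hi Hj. rewrite <- (E' x t Hxt i j Hi Hj).
  destruct (H x t i j Hxt Hi Hj) as [H1 H2].
  split; (eapply is_deriv_in_ext; [|exact Hxt|eassumption]);
    intros y Hy; simpl; rewrite (E x y Hy i j Hi Hj); reflexivity.
Qed.

Lemma pdt_in_schwarz U U' T Y : 0 < e ->
  pdx_in m1 m2 (Sq e) U U' -> pdt_in m1 m2 (Sq e) U T -> pdx_in m1 m2 (Sq e) T Y ->
  entrywise m1 m2 (fun u _ => cont_sq e u) Y Y -> pdt_in m1 m2 (Sq e) U' Y.
Proof.
  rewrite !pdx_in_Sq_entrywise, !pdt_in_Sq_entrywise.
  intros He HU HT HY HcY i j Hi Hj.
  destruct (HU i j Hi Hj), (HT i j Hi Hj), (HY i j Hi Hj), (HcY i j Hi Hj).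
  split; eapply schwarz_sq; eauto.
Qed.

Hypothesis He : 0 < e.

Lemma pdx_in_Sq_unique U U1 U2 : pdx_in m1 m2 (Sq e) U U1 -> pdx_in m1 m2 (Sq e) U U2 ->
  forall x t, Sq e x t -> Meq m1 m2 (U1 x t) (U2 x t).
Proof.
  rewrite !pdx_in_Sq_entrywise. intros H1 H2 x t Hxt i j Hi Hj.
  destruct (H1 i j Hi Hj) as [R1 I1], (H2 i j Hi Hj) as [R2 I2].
  apply injective_projections;
    [exact (dx_sq_unique e He _ _ _ R1 R2 x t Hxt)|exact (dx_sq_unique e He _ _ _ I1 I2 x t Hxt)].
Qed.

Lemma pdt_in_Sq_edge_unique U V T T' :
  pdt_in m1 m2 (Sq e) U T -> pdt_in m1 m2 (Sq e) V T' ->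
  (forall t, 0 <= t <= e -> Meq m1 m2 (U 0 t) (V 0 t)) ->
  forall t, 0 <= t <= e -> Meq m1 m2 (T 0 t) (T' 0 t).
Proof.
  intros HU HV E t Ht i j Hi Hj.
  assert (S0 : Sq e 0 t) by (split; lra).
  destruct (HU 0 t i j S0 Hi Hj) as [U1 U2]. destruct (HV 0 t i j S0 Hi Hj) as [V1 V2].
  assert (Pts : forall d, 0 < d -> exists h, punctured_nbhd (fun s => Sq e 0 s) t d h).
  { intros d Hd. destruct (interval_punctured_nonempty 0 e t He Ht d Hd) as [h [X [Y Z]]].
    exists h. repeat split; auto; lra. }
  apply injective_projections; (eapply is_deriv_in_unique; [exact Pts|eassumption|]);
    (eapply is_deriv_in_ext; [|exact S0|eassumption]);
    intros s [_ Hs]; simpl; rewrite (E s Hs i j Hi Hj); reflexivity.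
Qed.

End Entries.

(** * The matrix NLS equation on the square *)

(* [(0, /2)] is [i/2]: the equation [2 v_t = i (v_xx - 2 v v^* v)] reads
   [v_t = nls_rhs v_xx (v v^* v)]. *)
Definition nls_rhs (G P : Mfun) : Mfun :=
  fun x t i j => Cmul (0, /2) (Cadd (G x t i j) (Copp (CRscal 2 (P x t i j)))).

Lemma nls_rhs_re G P x t i j :
  fst (nls_rhs G P x t i j) = -/2 * snd (G x t i j) + snd (P x t i j).
Proof. unfold nls_rhs, Cmul, Cadd, Copp, CRscal; simpl. field. Qed.

Lemma nls_rhs_im G P x t i j :
  snd (nls_rhs G P x t i j) = /2 * fst (G x t i j) + - fst (P x t i j).
Proof. unfold nls_rhs, Cmul, Cadd, Copp, CRscal; simpl. field. Qed.

Lemma nls_rhs_cancel G1 G2 P1 P2 x t i j :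
  nls_rhs G1 P1 x t i j = nls_rhs G2 P2 x t i j -> P1 x t i j = P2 x t i j ->
  G1 x t i j = G2 x t i j.
Proof.
  intros E EP. pose proof (f_equal fst E) as E1. pose proof (f_equal snd E) as E2.
  rewrite !nls_rhs_re in E1. rewrite !nls_rhs_im in E2. rewrite EP in E1, E2.
  apply injective_projections; lra.
Qed.

Lemma nls_solve_for_vt (z X : C) : CRscal 2 z = Cmul Ci X -> z = Cmul (0, /2) X.
Proof.
  destruct z as [z1 z2], X as [X1 X2]. unfold CRscal, Cmul, Ci; simpl. intros H.
  inversion H. apply injective_projections; simpl; lra.
Qed.

Section NlsRhs.
Variables (m1 m2 : nat) (e : R).

Lemma nls_rhs_dx G G' P P' :
  pdx_in m1 m2 (Sq e) G G' -> entrywise m1 m2 (dx_sq e) P P' ->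
  pdx_in m1 m2 (Sq e) (nls_rhs G P) (nls_rhs G' P').
Proof.
  rewrite !pdx_in_Sq_entrywise. intros HG HP i j Hi Hj.
  destruct (HG i j Hi Hj) as [G1 G2], (HP i j Hi Hj) as [P1 P2].
  split.
  - eapply dx_sq_ext; [| |exact (dx_sq_lin e (-/2) _ _ _ _ G2 P2)];
      intros x t _; unfold re_entry; rewrite nls_rhs_re; reflexivity.
  - eapply dx_sq_ext; [| |exact (dx_sq_lin e (/2) _ _ _ _ G1 (dx_sq_opp e _ _ P1))];
      intros x t _; unfold im_entry; rewrite nls_rhs_im; reflexivity.
Qed.

Lemma nls_rhs_cont G P :
  entrywise m1 m2 (fun u _ => cont_sq e u) G G -> entrywise m1 m2 (fun u _ => cont_sq e u) P P ->
  entrywise m1 m2 (fun u _ => cont_sq e u) (nls_rhs G P) (nls_rhs G P).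
Proof.
  intros HG HP i j Hi Hj.
  destruct (HG i j Hi Hj) as [G1 G2], (HP i j Hi Hj) as [P1 P2].
  split.
  - eapply cont_sq_ext; [|exact (cont_sq_lin e (-/2) _ _ G2 P2)].
    intros x t _. unfold re_entry. rewrite nls_rhs_re. reflexivity.
  - eapply cont_sq_ext; [|exact (cont_sq_lin e (/2) _ _ G1 (cont_sq_opp e _ P1))].
    intros x t _. unfold im_entry. rewrite nls_rhs_im. reflexivity.
Qed.

Definition mx_xsmooth (n : nat) (P : Mfun) : Prop :=
  entrywise m1 m2 (fun u _ => xsmooth e n u) P P.

Definition xderiv_choice (m : nat) (u : RF) : RF :=
  epsilon (inhabits (fun _ _ => 0)) (fun u' => dx_sq e u u' /\ xsmooth e m u').

Definition mx_xderiv (m : nat) (P : Mfun) : Mfun := fun x t i j =>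
  (xderiv_choice m (re_entry P i j) x t, xderiv_choice m (im_entry P i j) x t).

Lemma xderiv_choice_spec m u :
  xsmooth e (S m) u -> dx_sq e u (xderiv_choice m u) /\ xsmooth e m (xderiv_choice m u).
Proof. intros [_ H]. unfold xderiv_choice. apply epsilon_spec. exact H. Qed.

Lemma mx_xderiv_spec m P : mx_xsmooth (S m) P ->
  entrywise m1 m2 (dx_sq e) P (mx_xderiv m P) /\ mx_xsmooth m (mx_xderiv m P).
Proof.
  intros H. split; intros i j Hi Hj; destruct (H i j Hi Hj) as [Hre Him];
    destruct (xderiv_choice_spec _ _ Hre), (xderiv_choice_spec _ _ Him); split; auto.
Qed.

End NlsRhs.

Section XderivFamily.
Variables (m1 m2 N : nat) (e : R) (F : nat -> Mfun).
Hypothesis He : 0 < e.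
Hypothesis HF1 : forall k, (k < N)%nat -> pdx_in m1 m2 (Sq e) (F k) (F (S k)).
Hypothesis HF2 : forall k, (k <= N)%nat -> cont_in m1 m2 (Sq e) (F k).

Lemma xderiv_family_entry_xchain p q : (p < m1)%nat -> (q < m2)%nat ->
  xchain e N (fun k => re_entry (F k) p q) /\ xchain e N (fun k => im_entry (F k) p q).
Proof.
  intros Hp Hq.
  assert (D : forall k, (k < N)%nat -> entrywise m1 m2 (dx_sq e) (F k) (F (S k)))
    by (intros k Hk; apply pdx_in_Sq_entrywise, HF1, Hk).
  assert (Cn : forall k, (k <= N)%nat -> entrywise m1 m2 (fun u _ => cont_sq e u) (F k) (F k))
    by (intros k Hk; apply cont_in_Sq_entrywise, HF2, Hk).
  split; split; intros k Hk; first [apply (D k Hk p q Hp Hq) | apply (Cn k Hk p q Hp Hq)].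
Qed.

(* [nonlin k] is [d_x^k (v v^* v)], one x-derivative being chosen at a time. *)
Fixpoint nonlin (k : nat) : Mfun :=
  match k with
  | O => fun x t => cubic m1 m2 (F 0%nat x t)
  | S k => mx_xderiv e (N - S k) (nonlin k)
  end.

Lemma nonlin_xsmooth k : (k <= N)%nat -> mx_xsmooth m1 m2 e (N - k) (nonlin k).
Proof.
  induction k as [|k IHk]; intros Hk.
  - apply (entrywise_cubic (fun u _ => xsmooth e (N - 0) u)).
    + intros; apply xsmooth_plus; auto.
    + intros; apply xsmooth_mult; auto.
    + intros; apply xsmooth_opp; auto.
    + intros; apply xsmooth_const.
    + intros p q Hp Hq. destruct (xderiv_family_entry_xchain p q Hp Hq) as [Cre Cim].
      split; [apply (xchain_xsmooth e N _ Cre)|apply (xchain_xsmooth e N _ Cim)]; lia.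
  - replace (N - k)%nat with (S (N - S k)) in IHk by lia.
    exact (proj2 (mx_xderiv_spec m1 m2 e _ _ (IHk ltac:(lia)))).
Qed.

Lemma nonlin_dx k : (k < N)%nat -> entrywise m1 m2 (dx_sq e) (nonlin k) (nonlin (S k)).
Proof.
  intros Hk. pose proof (nonlin_xsmooth k ltac:(lia)) as H.
  replace (N - k)%nat with (S (N - S k)) in H by lia.
  exact (proj1 (mx_xderiv_spec m1 m2 e _ _ H)).
Qed.

Hypothesis HF_nls : pdt_in m1 m2 (Sq e) (F 0%nat) (nls_rhs (F 2%nat) (nonlin 0)).

Lemma xderiv_family_nls k : (k + 2 <= N)%nat ->
  pdt_in m1 m2 (Sq e) (F k) (nls_rhs (F (S (S k))) (nonlin k)).
Proof.
  induction k as [|k IHk]; intros Hk; [exact HF_nls|].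
  apply (pdt_in_schwarz m1 m2 e (F k) _ (nls_rhs (F (S (S k))) (nonlin k))); auto.
  - apply HF1; lia.
  - apply IHk; lia.
  - apply nls_rhs_dx; [apply HF1; lia|apply nonlin_dx; lia].
  - apply nls_rhs_cont; [apply cont_in_Sq_entrywise, HF2; lia|].
    intros p q Hp Hq. destruct (nonlin_xsmooth (S k) ltac:(lia) p q Hp Hq).
    split; eapply xsmooth_cont; eauto.
Qed.

Lemma xderiv_family_mixed_commute r : (r + 3 <= N)%nat -> mixed_commute m1 m2 (Sq e) F r.
Proof.
  intros Hr k Hk.
  exists (nls_rhs (F (S (S k))) (nonlin k)), (nls_rhs (F (S (S (S k)))) (nonlin (S k))).
  split; [|split].
  - apply xderiv_family_nls; lia.
  - apply nls_rhs_dx; [apply HF1; lia|apply nonlin_dx; lia].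
  - apply (xderiv_family_nls (S k)); lia.
Qed.

End XderivFamily.

Section BoundaryAgreement.
Variables (m1 m2 N : nat) (e : R) (F G : nat -> Mfun).
Hypothesis He : 0 < e.
Hypothesis HF1 : forall k, (k < N)%nat -> pdx_in m1 m2 (Sq e) (F k) (F (S k)).
Hypothesis HF2 : forall k, (k <= N)%nat -> cont_in m1 m2 (Sq e) (F k).
Hypothesis HG1 : forall k, (k < N)%nat -> pdx_in m1 m2 (Sq e) (G k) (G (S k)).
Hypothesis HG2 : forall k, (k <= N)%nat -> cont_in m1 m2 (Sq e) (G k).

Lemma nonlin_edge_agree k m : (k + m <= N)%nat ->
  (forall j t, (j <= k + m)%nat -> 0 <= t <= e -> Meq m1 m2 (F j 0 t) (G j 0 t)) ->
  entrywise m1 m2 (edge_agree e m) (nonlin m1 m2 N e F k) (nonlin m1 m2 N e G k).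
Proof.
  revert m; induction k as [|k IHk]; intros m Hkm HA.
  - apply (entrywise_cubic (edge_agree e m)).
    + intros; apply edge_agree_plus; auto.
    + intros; apply edge_agree_mult; auto.
    + intros; apply edge_agree_opp; auto.
    + intros; apply edge_agree_const.
    + intros p q Hp Hq.
      destruct (xderiv_family_entry_xchain m1 m2 N e F HF1 HF2 p q Hp Hq) as [Fre Fim].
      destruct (xderiv_family_entry_xchain m1 m2 N e G HG1 HG2 p q Hp Hq) as [Gre Gim].
      split; [apply (xchain_edge_agree e N _ _ m Fre Gre)
             |apply (xchain_edge_agree e N _ _ m Fim Gim)]; try lia;
        intros j t Hj Ht; unfold re_entry, im_entry;
        rewrite (HA j t ltac:(lia) Ht p q Hp Hq); reflexivity.
  - intros p q Hp Hq.
    destruct (IHk (S m) ltac:(lia) ltac:(intros j t Hj Ht; apply HA; auto; lia) p q Hp Hq)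
      as [[_ [u1 [w1 [U1 [W1 A1]]]]] [_ [u2 [w2 [U2 [W2 A2]]]]]].
    destruct (nonlin_dx m1 m2 N e F HF1 HF2 k ltac:(lia) p q Hp Hq) as [V1 V2].
    destruct (nonlin_dx m1 m2 N e G HG1 HG2 k ltac:(lia) p q Hp Hq) as [X1 X2].
    split; [apply (edge_agree_ext e m u1 w1)|apply (edge_agree_ext e m u2 w2)]; try assumption.
    all: intros x t Hxt; eapply dx_sq_unique; [exact He| | |exact Hxt]; eassumption.
Qed.

Hypothesis HF_nls : pdt_in m1 m2 (Sq e) (F 0%nat) (nls_rhs (F 2%nat) (nonlin m1 m2 N e F 0)).
Hypothesis HG_nls : pdt_in m1 m2 (Sq e) (G 0%nat) (nls_rhs (G 2%nat) (nonlin m1 m2 N e G 0)).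

Lemma boundary_agree_succ2 k : (k + 2 <= N)%nat ->
  (forall j t, (j <= S k)%nat -> 0 <= t <= e -> Meq m1 m2 (F j 0 t) (G j 0 t)) ->
  forall t, 0 <= t <= e -> Meq m1 m2 (F (S (S k)) 0 t) (G (S (S k)) 0 t).
Proof.
  intros Hk HA t Ht i j Hi Hj.
  apply (nls_rhs_cancel _ _ (nonlin m1 m2 N e F k) (nonlin m1 m2 N e G k) 0 t i j).
  - refine (pdt_in_Sq_edge_unique m1 m2 e He (F k) (G k) _ _
              (xderiv_family_nls m1 m2 N e F He HF1 HF2 HF_nls k Hk)
              (xderiv_family_nls m1 m2 N e G He HG1 HG2 HG_nls k Hk) _ t Ht i j Hi Hj).
    intros s Hs. apply HA; auto.
  - destruct (nonlin_edge_agree k 0 ltac:(lia) ltac:(intros l s Hl Hs; apply HA; auto; lia)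
                i j Hi Hj) as [[E1 _] [E2 _]].
    apply injective_projections; [apply E1|apply E2]; auto.
Qed.

Lemma boundary_agree :
  (forall t, 0 <= t <= e -> Meq m1 m2 (F 0%nat 0 t) (G 0%nat 0 t)) ->
  (forall t, 0 <= t <= e -> Meq m1 m2 (F 1%nat 0 t) (G 1%nat 0 t)) ->
  forall k t, (k <= N)%nat -> 0 <= t <= e -> Meq m1 m2 (F k 0 t) (G k 0 t).
Proof.
  intros A0 A1.
  assert (Hind : forall n k t, (k <= n)%nat -> (k <= N)%nat -> 0 <= t <= e ->
                 Meq m1 m2 (F k 0 t) (G k 0 t)).
  { induction n as [|n IHn]; intros k t Hkn HkN Ht.
    - replace k with 0%nat by lia. auto.
    - destruct (Nat.eq_dec k (S n)) as [->|Hne]; [|apply IHn; auto; lia].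
      destruct n as [|k]; [auto|].
      apply boundary_agree_succ2; auto; [lia|]. intros; apply IHn; auto; lia. }
  intros k t Hk Ht. exact (Hind k k t (le_n k) Hk Ht).
Qed.

End BoundaryAgreement.

Lemma below_a_le a t e : t <= e -> below_a a e -> below_a a t.
Proof. destruct a; simpl; auto. lra. Qed.

Lemma Sq_Dom a e : below_a a e -> forall x t, Sq e x t -> Dom a x t.
Proof. intros Hb x t [Hx Ht]. split; [lra|split; [lra|]]. eapply below_a_le; [|exact Hb]. lra. Qed.

Section Restriction.
Variables (m1 m2 : nat) (Om Om' : R -> R -> Prop).
Hypothesis Hsub : forall x t, Om' x t -> Om x t.

Lemma pdx_in_subset U U' : pdx_in m1 m2 Om U U' -> pdx_in m1 m2 Om' U U'.
Proof.
  intros H x t i j Hxt Hi Hj. destruct (H x t i j (Hsub _ _ Hxt) Hi Hj) as [A B].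
  split; [eapply is_deriv_in_subset; [|exact A]|eapply is_deriv_in_subset; [|exact B]];
    intros y; apply Hsub.
Qed.

Lemma pdt_in_subset U U' : pdt_in m1 m2 Om U U' -> pdt_in m1 m2 Om' U U'.
Proof.
  intros H x t i j Hxt Hi Hj. destruct (H x t i j (Hsub _ _ Hxt) Hi Hj) as [A B].
  split; [eapply is_deriv_in_subset; [|exact A]|eapply is_deriv_in_subset; [|exact B]];
    intros y; apply Hsub.
Qed.

Lemma cont_in_subset U : cont_in m1 m2 Om U -> cont_in m1 m2 Om' U.
Proof.
  intros H x t i j Hxt Hi Hj eps Heps.
  destruct (H x t i j (Hsub _ _ Hxt) Hi Hj eps Heps) as [d [Hd P]].
  exists d; split; [exact Hd|]. intros y s Hys. exact (P y s (Hsub _ _ Hys)).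
Qed.

Lemma xderiv_family_subset v n F :
  xderiv_family m1 m2 Om v n F -> xderiv_family m1 m2 Om' v n F.
Proof.
  intros [H0 [H1 H2]]. split; [|split].
  - intros x t Hxt. apply H0, Hsub, Hxt.
  - intros k Hk. apply pdx_in_subset, H1, Hk.
  - intros k Hk. apply cont_in_subset, H2, Hk.
Qed.

End Restriction.

Lemma xderiv_family_le m1 m2 Om v n n' F : (n' <= n)%nat ->
  xderiv_family m1 m2 Om v n F -> xderiv_family m1 m2 Om v n' F.
Proof. intros Hn [H0 [H1 H2]]. split; [auto|split; intros; [apply H1|apply H2]; lia]. Qed.

Lemma Csum_ext n f g : (forall q, (q < n)%nat -> f q = g q) -> Csum n f = Csum n g.
Proof. induction n; intros H; simpl; auto. rewrite IHn, H; auto. Qed.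

Lemma cubic_ext m1 m2 A B : Meq m1 m2 A B -> Meq m1 m2 (cubic m1 m2 A) (cubic m1 m2 B).
Proof.
  intros H i j Hi Hj. unfold cubic. apply Csum_ext. intros q Hq.
  rewrite (H q j Hq Hj). f_equal. apply Csum_ext. intros p Hp. rewrite H, (H q p); auto.
Qed.

Section NlsOnSquare.
Variables (m1 m2 N : nat) (e : R) (a : option R) (F : nat -> Mfun) (v : Mfun).
Hypothesis He : 0 < e.
Hypothesis Hb : below_a a e.
Hypothesis HF : xderiv_family m1 m2 (Sq e) v N F.

Lemma xderiv_family_Dom_deriv k U U' : (k < N)%nat ->
  (forall x t, Sq e x t -> Meq m1 m2 (F k x t) (U x t)) -> pdx_in m1 m2 (Dom a) U U' ->
  forall x t, Sq e x t -> Meq m1 m2 (F (S k) x t) (U' x t).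
Proof.
  intros Hk E HU. destruct HF as [_ [HF1 _]].
  apply (pdx_in_Sq_unique m1 m2 e He (F k)); [apply HF1, Hk|].
  eapply pdx_in_Sq_ext; [| |exact (pdx_in_subset m1 m2 _ _ (Sq_Dom a e Hb) _ _ HU)].
  - intros x t Hxt i j Hi Hj. symmetry. apply E; auto.
  - intros; intros i j Hi Hj; reflexivity.
Qed.

Lemma xderiv_family_nls_base : (2 <= N)%nat -> nls m1 m2 a v ->
  pdt_in m1 m2 (Sq e) (F 0%nat) (nls_rhs (F 2%nat) (nonlin m1 m2 N e F 0)).
Proof.
  intros HN [vx [vt [vxx [Hvx [Hvt [Hvxx Heq]]]]]].
  pose proof HF as [HF0 _].
  assert (E1 := xderiv_family_Dom_deriv 0 v vx ltac:(lia) HF0 Hvx).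
  assert (E2 := xderiv_family_Dom_deriv 1 vx vxx ltac:(lia) E1 Hvxx).
  eapply pdt_in_Sq_ext; [| |exact (pdt_in_subset m1 m2 _ _ (Sq_Dom a e Hb) _ _ Hvt)].
  - intros x t Hxt i j Hi Hj. symmetry. apply HF0; auto.
  - intros x t Hxt i j Hi Hj. simpl. unfold nls_rhs.
    rewrite (nls_solve_for_vt _ _ (Heq x t i j (Sq_Dom a e Hb x t Hxt) Hi Hj)).
    rewrite (E2 x t Hxt i j Hi Hj), (cubic_ext m1 m2 (F 0%nat x t) (v x t) (HF0 x t Hxt) i j Hi Hj).
    reflexivity.
Qed.

End NlsOnSquare.

Lemma Cq_common_square m1 m2 a M v w n : Cq m1 m2 a M v -> Cq m1 m2 a M w ->
  exists e, 0 < e /\ below_a a e /\ exists F G,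
    xderiv_family m1 m2 (Sq e) v n F /\ xderiv_family m1 m2 (Sq e) w n G.
Proof.
  intros [_ [_ [_ [_ Hv]]]] [_ [_ [_ [_ Hw]]]].
  destruct (Hv n) as [ev [Hev [Hbv [F HF]]]]. destruct (Hw n) as [ew [Hew [Hbw [G HG]]]].
  pose proof (Rmin_l ev ew); pose proof (Rmin_r ev ew).
  exists (Rmin ev ew). split; [apply Rmin_glb_lt; auto|].
  split; [eapply below_a_le; [apply Rmin_l|exact Hbv]|].
  exists F, G. split.
  - eapply xderiv_family_subset; [|exact HF]. intros x t [Hx Ht]. split; lra.
  - eapply xderiv_family_subset; [|exact HG]. intros x t [Hx Ht]. split; lra.
Qed.

Lemma local_determination (m1 m2 : nat) (a : option R) (M : nat -> nat -> nat -> R)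
    (v w : Mfun) :
  Cq m1 m2 a M v -> nls m1 m2 a v -> Cq m1 m2 a M w -> nls m1 m2 a w ->
  (forall t, 0 <= t -> below_a a t -> Meq m1 m2 (v 0 t) (w 0 t)) ->
  (exists vx wx, pdx_in m1 m2 (Dom a) v vx /\ pdx_in m1 m2 (Dom a) w wx /\
     forall t, 0 <= t -> below_a a t -> Meq m1 m2 (vx 0 t) (wx 0 t)) ->
  forall r : nat, exists eps, 0 < eps /\ below_a a eps /\
    exists F G,
      xderiv_family m1 m2 (Sq eps) v (S r) F /\
      xderiv_family m1 m2 (Sq eps) w (S r) G /\
      mixed_commute m1 m2 (Sq eps) F r /\
      mixed_commute m1 m2 (Sq eps) G r /\
      (forall k t, (k <= r)%nat -> 0 <= t <= eps -> Meq m1 m2 (F k 0 t) (G k 0 t)).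
Proof.
  intros Hcv Hnv Hcw Hnw Hbd [vx [wx [Hvx [Hwx Hbd1]]]] r.
  destruct (Cq_common_square m1 m2 a M v w (r + 3) Hcv Hcw) as [e [He [Hb [F [G [HF HG]]]]]].
  pose proof HF as [HF0 [HF1 HF2]]. pose proof HG as [HG0 [HG1 HG2]].
  assert (HFn := xderiv_family_nls_base m1 m2 (r + 3) e a F v He Hb HF ltac:(lia) Hnv).
  assert (HGn := xderiv_family_nls_base m1 m2 (r + 3) e a G w He Hb HG ltac:(lia) Hnw).
  assert (Hedge : forall t, 0 <= t <= e -> Sq e 0 t /\ below_a a t)
    by (intros t Ht; split; [split; lra|eapply below_a_le; [|exact Hb]; lra]).
  assert (A0 : forall t, 0 <= t <= e -> Meq m1 m2 (F 0%nat 0 t) (G 0%nat 0 t)).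
  { intros t Ht i j Hi Hj. destruct (Hedge t Ht) as [S0 Bt].
    rewrite (HF0 0 t S0 i j Hi Hj), (HG0 0 t S0 i j Hi Hj). apply Hbd; auto; lra. }
  assert (A1 : forall t, 0 <= t <= e -> Meq m1 m2 (F 1%nat 0 t) (G 1%nat 0 t)).
  { intros t Ht i j Hi Hj. destruct (Hedge t Ht) as [S0 Bt].
    rewrite (xderiv_family_Dom_deriv m1 m2 (r + 3) e a F v He Hb HF 0 v vx ltac:(lia) HF0 Hvx
               0 t S0 i j Hi Hj).
    rewrite (xderiv_family_Dom_deriv m1 m2 (r + 3) e a G w He Hb HG 0 w wx ltac:(lia) HG0 Hwx
               0 t S0 i j Hi Hj).
    apply Hbd1; auto; lra. }
  exists e. split; [exact He|]. split; [exact Hb|]. exists F, G.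
  split; [apply (xderiv_family_le _ _ _ _ (r + 3)); [lia|exact HF]|].
  split; [apply (xderiv_family_le _ _ _ _ (r + 3)); [lia|exact HG]|].
  split; [apply (xderiv_family_mixed_commute m1 m2 (r + 3) e F); auto; lia|].
  split; [apply (xderiv_family_mixed_commute m1 m2 (r + 3) e G); auto; lia|].
  intros k t Hk Ht. apply (boundary_agree m1 m2 (r + 3) e F G); auto; lia.
Qed.

(** * Quasi-analytic continuation *)

Lemma deriv_family1_sub f g Phi Psi : deriv_family1 f Phi -> deriv_family1 g Psi ->
  deriv_family1 (fun x => Cadd (f x) (Copp (g x)))
                (fun k x => Cadd (Phi k x) (Copp (Psi k x))).
Proof.
  intros [HP0 HP1] [HQ0 HQ1]. split.
  - intros x Hx. rewrite HP0, HQ0 by exact Hx. reflexivity.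
  - intros k x Hx. destruct (HP1 k x Hx) as [A1 A2], (HQ1 k x Hx) as [B1 B2].
    split; apply is_deriv_in_plus; auto; apply is_deriv_in_opp; auto.
Qed.

Lemma pow_add_le (A B : R) n : 0 <= A -> 0 <= B -> A ^ S n + B ^ S n <= (A + B) ^ S n.
Proof.
  intros HA HB. induction n; [simpl; lra|].
  change ((A + B) ^ S (S n)) with ((A + B) * (A + B) ^ S n).
  change (A ^ S (S n)) with (A * A ^ S n). change (B ^ S (S n)) with (B * B ^ S n).
  pose proof (pow_le A (S n) HA). pose proof (pow_le B (S n) HB). nra.
Qed.

Lemma in_classC_sub Mk f g : (forall k, 0 <= Mk k) ->
  in_classC Mk f -> in_classC Mk g -> in_classC Mk (fun x => Cadd (f x) (Copp (g x))).
Proof.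
  intros HM [Phi [HPhi [A [HA HAb]]]] [Psi [HPsi [B [HB HBb]]]].
  exists (fun k x => Cadd (Phi k x) (Copp (Psi k x))).
  split; [apply deriv_family1_sub; auto|]. exists (A + B). split; [lra|].
  intros k x Hx.
  assert (Htri : Cmod (Cadd (Phi k x) (Copp (Psi k x))) <= Cmod (Phi k x) + Cmod (Psi k x)).
  { pose proof (Coquelicot.Complex.Cmod_triangle (Phi k x) (Coquelicot.Complex.Copp (Psi k x)))
      as H. rewrite Coquelicot.Complex.Cmod_opp in H. exact H. }
  pose proof (HAb k x Hx). pose proof (HBb k x Hx).
  pose proof (Rmult_le_compat_r _ _ _ (HM k) (pow_add_le A B k HA HB)). lra.
Qed.

Lemma deriv_family1_xderiv m1 m2 eps v n F Phi i j : 0 < eps ->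
  xderiv_family m1 m2 (Sq eps) v n F -> (i < m1)%nat -> (j < m2)%nat ->
  deriv_family1 (fun x => v x 0 i j) Phi ->
  forall k, (k <= n)%nat -> forall x, 0 <= x <= eps -> Phi k x = F k x 0 i j.
Proof.
  intros He [F0 [F1 F2]] Hi Hj [P0 P1] k. induction k as [|k IHk]; intros Hk x Hx.
  - rewrite P0 by lra. symmetry. apply F0; auto. split; lra.
  - assert (Sx : Sq eps x 0) by (split; lra).
    destruct (F1 k ltac:(lia) x 0 i j Sx Hi Hj) as [D1 D2].
    destruct (P1 k x ltac:(lra)) as [E1 E2].
    assert (Pts : forall d, 0 < d -> exists h, punctured_nbhd (fun y => Sq eps y 0) x d h).
    { intros d Hd. destruct (interval_punctured_nonempty 0 eps x He Hx d Hd) as [h [X [Y Z]]].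
      exists h. repeat split; auto; lra. }
    assert (Sub : forall y, Sq eps y 0 -> nonneg y) by (intros y [Hy _]; unfold nonneg; lra).
    apply injective_projections; (eapply is_deriv_in_unique; [exact Pts| |eassumption]);
      (eapply is_deriv_in_ext; [|exact Sx|eapply is_deriv_in_subset; [exact Sub|eassumption]]);
      intros y [Hy _]; simpl; rewrite IHk; auto; lia.
Qed.

Lemma Cq_initial_data_unique m1 m2 a M v w :
  (forall i j k, (i < m1)%nat -> (j < m2)%nat -> 0 < M i j k) ->
  Cq m1 m2 a M v -> Cq m1 m2 a M w ->
  (forall k, exists eps, 0 < eps /\ exists F G,
     xderiv_family m1 m2 (Sq eps) v k F /\ xderiv_family m1 m2 (Sq eps) w k G /\
     Meq m1 m2 (F k 0 0) (G k 0 0)) ->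
  forall x, 0 <= x -> Meq m1 m2 (v x 0) (w x 0).
Proof.
  intros HM [_ [_ [_ [Hqv _]]]] [_ [_ [_ [Hqw _]]]] H0 x Hx i j Hi Hj.
  destruct (Hqv i j Hi Hj) as [Hcv Hqa]. destruct (Hqw i j Hi Hj) as [Hcw _].
  pose proof Hcv as [Phi [HPhi _]]. pose proof Hcw as [Psi [HPsi _]].
  assert (Hzero : forall k, Cadd (Phi k 0) (Copp (Psi k 0)) = C0).
  { intros k. destruct (H0 k) as [eps [Heps [F [G [HF [HG Hk]]]]]].
    rewrite (deriv_family1_xderiv m1 m2 eps v k F Phi i j Heps HF Hi Hj HPhi k (le_n k) 0),
            (deriv_family1_xderiv m1 m2 eps w k G Psi i j Heps HG Hi Hj HPsi k (le_n k) 0),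
            (Hk i j Hi Hj) by lra.
    apply injective_projections; simpl; ring. }
  pose proof (Hqa _ (in_classC_sub _ _ _ (fun k => Rlt_le _ _ (HM i j k Hi Hj)) Hcv Hcw) _
                (deriv_family1_sub _ _ _ _ HPhi HPsi) 0 (Rle_refl 0) Hzero x Hx) as Hf.
  apply injective_projections;
    [pose proof (f_equal fst Hf) as E|pose proof (f_equal snd Hf) as E]; simpl in E; lra.
Qed.

Theorem mainTheorem5 :
  forall (m1 m2 : nat) (a : option R) (M : nat -> nat -> nat -> R) (v w : Mfun),
    a_pos a ->
    (forall i j k, (i < m1)%nat -> (j < m2)%nat -> 0 < M i j k) ->
    Cq m1 m2 a M v -> nls m1 m2 a v ->
    Cq m1 m2 a M w -> nls m1 m2 a w ->
    (forall t, 0 <= t -> below_a a t -> Meq m1 m2 (v 0 t) (w 0 t)) ->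
    (exists vx wx, pdx_in m1 m2 (Dom a) v vx /\ pdx_in m1 m2 (Dom a) w wx /\
       forall t, 0 <= t -> below_a a t -> Meq m1 m2 (vx 0 t) (wx 0 t)) ->
    (forall r : nat, exists eps, 0 < eps /\ below_a a eps /\
       exists F G,
         xderiv_family m1 m2 (Sq eps) v (S r) F /\
         xderiv_family m1 m2 (Sq eps) w (S r) G /\
         mixed_commute m1 m2 (Sq eps) F r /\
         mixed_commute m1 m2 (Sq eps) G r /\
         (forall k t, (k <= r)%nat -> 0 <= t <= eps ->
            Meq m1 m2 (F k 0 t) (G k 0 t))) /\
    (forall x, 0 <= x -> Meq m1 m2 (v x 0) (w x 0)).
Proof.
  intros m1 m2 a M v w _ HM Hcv Hnv Hcw Hnw Hbd Hbd1.
  pose proof (local_determination m1 m2 a M v w Hcv Hnv Hcw Hnw Hbd Hbd1) as Hloc.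
  split; [exact Hloc|].
  apply (Cq_initial_data_unique m1 m2 a M v w HM Hcv Hcw).
  intros k. destruct (Hloc k) as [eps [Heps [_ [F [G [HF [HG [_ [_ Hagree]]]]]]]]].
  exists eps. split; [exact Heps|]. exists F, G.
  split; [|split].
  - exact (xderiv_family_le _ _ _ _ _ _ _ (le_S _ _ (le_n k)) HF).
  - exact (xderiv_family_le _ _ _ _ _ _ _ (le_S _ _ (le_n k)) HG).
  - apply Hagree; [lia|lra].
Qed.
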